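(* Let $R$ be a commutative ring with identity and $S$ a multiplicative subset of $R$. Let $\xi: 0\rightarrow A\xrightarrow{f} B\xrightarrow{g} C\rightarrow 0$ be a $u$-$S$-split short $u$-$S$-exact sequence of $R$-modules. Then $\xi$ is $u$-$S$-pure.
   Context: A multiplicative subset $S$ satisfies $1\in S$ and is closed under products. A short sequence $0\to A\xrightarrow{f}B\xrightarrow{g}C\to 0$ is $u$-$S$-exact if there is $s\in S$ with $s\,\mathrm{Ker}(f)=0$, $s\,\mathrm{Ker}(g)\subseteq\mathrm{Im}(f)$, $s\,\mathrm{Im}(f)\subseteq\mathrm{Ker}(g)$, $sC\subseteq\mathrm{Im}(g)$. Such a sequence is $u$-$S$-split if there are $s\in S$ and an $R$-homomorphism $t:B\to A$ with $tf=s\,\mathrm{Id}_A$. It is $u$-$S$-pure if for every $R$-module $M$ the induced sequence $0\rightarrow M\otimes_RA\rightarrow M\otimes_RB\rightarrow M\otimes_RC\rightarrow 0$ is $u$-$S$-exact. *)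

From HB Require Import structures.
From mathcomp Require Import all_boot all_order all_algebra.
Set Implicit Arguments. Unset Strict Implicit. Unset Printing Implicit Defensive.
Import GRing.Theory.
Local Open Scope ring_scope.

Definition multiplicative (R : comNzRingType) (S : R -> Prop) : Prop :=
  S 1 /\ (forall x y, S x -> S y -> S (x * y)).

Definition u_S_exact (R : comNzRingType) (S : R -> Prop) (A B C : lmodType R)
    (f : A -> B) (g : B -> C) : Prop :=
  exists2 s, S s &
    [/\ (forall a, f a = 0 -> s *: a = 0),
        (forall b, g b = 0 -> exists a, f a = s *: b),
        (forall a, g (s *: f a) = 0)
      & (forall c, exists b, g b = s *: c)].

Definition u_S_split (R : comNzRingType) (S : R -> Prop) (A B : lmodType R)
    (f : A -> B) : Prop :=
  exists2 s, S s & exists t : {linear B -> A}, forall a, t (f a) = s *: a.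

Definition bilinear_map (R : comNzRingType) (M A T : lmodType R)
    (h : M -> A -> T) : Prop :=
  (forall m r a a', h m (r *: a + a') = r *: h m a + h m a') /\
  (forall a r m m', h (r *: m + m') a = r *: h m a + h m' a).

Definition is_tensor_product (R : comNzRingType) (M A T : lmodType R)
    (t : M -> A -> T) : Prop :=
  bilinear_map t /\
  forall (W : lmodType R) (h : M -> A -> W), bilinear_map h ->
    (exists phi : {linear T -> W}, forall m a, phi (t m a) = h m a) /\
    (forall phi psi : {linear T -> W},
        (forall m a, phi (t m a) = psi (t m a)) -> forall x, phi x = psi x).

(* u-S-purity: for every R-module M, for tensor products M(x)A, M(x)B, M(x)C,
   and the induced maps 1(x)f, 1(x)g (characterised by their values on pure
   tensors; they exist and are unique), the tensored sequence is u-S-exact. *)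
Definition u_S_pure (R : comNzRingType) (S : R -> Prop) (A B C : lmodType R)
    (f : A -> B) (g : B -> C) : Prop :=
  forall (M TA TB TC : lmodType R) (tA : M -> A -> TA) (tB : M -> B -> TB)
         (tC : M -> C -> TC),
    is_tensor_product tA -> is_tensor_product tB -> is_tensor_product tC ->
    forall (F : {linear TA -> TB}) (G : {linear TB -> TC}),
      (forall m a, F (tA m a) = tB m (f a)) ->
      (forall m b, G (tB m b) = tC m (g b)) ->
      u_S_exact S F G.

From Pilot Require Import Defs.
From HB Require Import structures.
From mathcomp Require Import all_boot all_order all_algebra.
Set Implicit Arguments.
Unset Strict Implicit.
Unset Printing Implicit Defensive.

Local Open Scope ring_scope.

(* If [t] splits [f] up to [s1] and [s0] witnesses u-S-exactness, choosing
   [s0]-preimages under [g] yields a map [u : C -> B] with [g u = s0^2 s1] and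
   [u g = s0^2 (s1 - f t)].  Together with [t f = s1] and [s0 g f = 0] these
   identities alone force u-S-exactness with constant [s0^2 s1].  They relate
   composites and multiples of linear maps, so by the uniqueness part of the
   universal property they hold as well for the maps induced on [M (x) -]:
   the tensored sequence is u-S-exact with the same constant. *)

Section ScaledSplittings.

(* Imported only here: [GRing.Theory.multiplicative] would hide
   [Defs.multiplicative] in the statement of [proposition2p3]. *)
Import GRing.Theory.

Definition scaled_splitting (R : comNzRingType) (A B C : lmodType R) (r s : R)
    (f : A -> B) (g : B -> C) (t : B -> A) (u : C -> B) : Prop :=
  [/\ t \o f =1 r \*: idfun, u \o g =1 s \*: (r \*: idfun \- (f \o t)),
      g \o u =1 (s * r) \*: idfun & s \*: (g \o f) =1 \0].

Lemma u_S_exact_of_scaled_splitting (R : comNzRingType) (S : R -> Prop)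
    (A B C : lmodType R) (r s : R) (f : {linear A -> B}) (g : {linear B -> C})
    (t : {linear B -> A}) (u : {linear C -> B}) :
  S (s * r) -> scaled_splitting r s f g t u -> u_S_exact S f g.
Proof.
move=> Ssr [tf ug gu gf]; exists (s * r) => //; split.
- by move=> a fa0; rewrite -scalerA -[r *: a]tf /= fa0 linear0 scaler0.
- move=> b gb0; exists (s *: t b).
  have := ug b; rewrite /= gb0 linear0 scalerBr => /esym/subr0_eq sb_eq.
  by rewrite linearZ -scalerA sb_eq.
- by move=> a; rewrite linearZ /= mulrC -scalerA [s *: _]gf scaler0.
- by move=> c; exists (u c); apply: gu.
Qed.

Section BilinearMap.

Variables (R : comNzRingType) (M A T : lmodType R) (t : M -> A -> T).
Hypothesis t_bilinear : bilinear_map t.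

Lemma bilinear_map0r m : t m 0 = 0.
Proof.
have := t_bilinear.1 m 1 0 0; rewrite scaler0 addr0 scale1r => /eqP.
by rewrite -subr_eq subrr eq_sym => /eqP.
Qed.

Lemma bilinear_mapZr m r a : t m (r *: a) = r *: t m a.
Proof.
by have := t_bilinear.1 m r a 0; rewrite !addr0 bilinear_map0r addr0.
Qed.

Lemma bilinear_mapBr m a b : t m (a - b) = t m a - t m b.
Proof.
by have := t_bilinear.1 m (-1) b a; rewrite !scaleN1r !(addrC (- _)).
Qed.

End BilinearMap.

Lemma bilinear_map0 (R : comNzRingType) (M A T : lmodType R) :
  bilinear_map (fun (_ : M) (_ : A) => 0 : T).
Proof. by split=> *; rewrite scaler0 addr0. Qed.

Lemma tensor_product_ext (R : comNzRingType) (M A T W : lmodType R)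
    (t : M -> A -> T) :
  is_tensor_product t -> forall phi psi : {linear T -> W},
  (forall m a, phi (t m a) = psi (t m a)) -> phi =1 psi.
Proof.
by move=> [_ univ] phi psi; have [_] := univ W _ (bilinear_map0 M A W); apply.
Qed.

Definition tensor_lift (R : comNzRingType) (M A B TA TB : lmodType R)
    (tA : M -> A -> TA) (tB : M -> B -> TB) (H : TA -> TB) (h : A -> B) :=
  forall m a, H (tA m a) = tB m (h a).

Section TensorLift.

Variables (R : comNzRingType) (M A B C TA TB TC : lmodType R).
Variables (tA : M -> A -> TA) (tB : M -> B -> TB) (tC : M -> C -> TC).

Lemma tensor_lift_exists : is_tensor_product tA -> bilinear_map tB ->
  forall h : {linear A -> B},
  exists H : {linear TA -> TB}, tensor_lift tA tB H h.
Proof.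
move=> [_ univ] tB_bilinear h.
have tBh_bilinear : bilinear_map (fun m a => tB m (h a)).
  split=> [m r a a' | a r m m']; first by rewrite linearP tB_bilinear.1.
  exact: tB_bilinear.2.
by have [] := univ TB _ tBh_bilinear.
Qed.

Lemma tensor_lift_unique (H H' : {linear TA -> TB}) (h h' : A -> B) :
  is_tensor_product tA -> tensor_lift tA tB H h -> tensor_lift tA tB H' h' ->
  h =1 h' -> H =1 H'.
Proof.
move=> tA_tensor Hh H'h' hh'; apply: tensor_product_ext tA_tensor _ _ _ => m a.
by rewrite Hh H'h' hh'.
Qed.

Lemma tensor_lift_id : tensor_lift tA tA idfun idfun.
Proof. by []. Qed.

Lemma tensor_lift_comp (H : TA -> TB) (K : TB -> TC) h k :
  tensor_lift tA tB H h -> tensor_lift tB tC K k ->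
  tensor_lift tA tC (K \o H) (k \o h).
Proof. by move=> Hh Kk m a; rewrite /= Hh Kk. Qed.

Lemma tensor_lift_scale r (H : TA -> TB) h : bilinear_map tB ->
  tensor_lift tA tB H h -> tensor_lift tA tB (r \*: H) (r \*: h).
Proof. by move=> tB_bilinear Hh m a; rewrite /= Hh bilinear_mapZr. Qed.

Lemma tensor_lift_sub (H H' : TA -> TB) h h' : bilinear_map tB ->
  tensor_lift tA tB H h -> tensor_lift tA tB H' h' ->
  tensor_lift tA tB (H \- H') (h \- h').
Proof.
by move=> tB_bilinear Hh H'h' m a; rewrite /= Hh H'h' bilinear_mapBr.
Qed.

Lemma tensor_lift_null : bilinear_map tB -> tensor_lift tA tB \0 \0.
Proof. by move=> tB_bilinear m a; rewrite /= bilinear_map0r. Qed.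

End TensorLift.

Lemma scaled_splitting_tensor (R : comNzRingType)
    (M A B C TA TB TC : lmodType R)
    (tA : M -> A -> TA) (tB : M -> B -> TB) (tC : M -> C -> TC) (r s : R)
    (f : A -> B) (g : B -> C) (t : B -> A) (u : C -> B)
    (F : {linear TA -> TB}) (G : {linear TB -> TC})
    (T : {linear TB -> TA}) (U : {linear TC -> TB}) :
  is_tensor_product tA -> is_tensor_product tB -> is_tensor_product tC ->
  tensor_lift tA tB F f -> tensor_lift tB tC G g ->
  tensor_lift tB tA T t -> tensor_lift tC tB U u ->
  scaled_splitting r s f g t u -> scaled_splitting r s F G T U.
Proof.
move=> tA_tensor tB_tensor tC_tensor Ff Gg Tt Uu [tf ug gu gf].
split.
- apply: (tensor_lift_unique tA_tensor (tensor_lift_comp Ff Tt) _ tf).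
  exact: tensor_lift_scale tA_tensor.1 (tensor_lift_id tA).
- apply: (tensor_lift_unique tB_tensor (tensor_lift_comp Gg Uu) _ ug).
  apply: tensor_lift_scale tB_tensor.1 (tensor_lift_sub tB_tensor.1 _ _).
    exact: tensor_lift_scale tB_tensor.1 (tensor_lift_id tB).
  exact: tensor_lift_comp Tt Ff.
- apply: (tensor_lift_unique tC_tensor (tensor_lift_comp Uu Gg) _ gu).
  exact: tensor_lift_scale tC_tensor.1 (tensor_lift_id tC).
- apply: (tensor_lift_unique tA_tensor _ (tensor_lift_null tA tC_tensor.1) gf).
  exact: tensor_lift_scale tC_tensor.1 (tensor_lift_comp Ff Gg).
Qed.

Section ScaledSection.

Variables (R : comNzRingType) (A B C : lmodType R) (s0 s1 : R).
Variables (f : {linear A -> B}) (g : {linear B -> C}) (t : {linear B -> A}).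
Hypotheses (tf : forall a, t (f a) = s1 *: a)
  (ker_g : forall b, g b = 0 -> exists a, f a = s0 *: b)
  (gf : forall a, g (s0 *: f a) = 0)
  (im_g : forall c, exists b, g b = s0 *: c).

Let e : {linear B -> B} := s1 \*: idfun \- (f \o t).

Fact e_ker b : g b = 0 -> s0 *: e b = 0.
Proof. by case/ker_g=> a fa; rewrite -linearZ -fa /= tf linearZ subrr. Qed.

Fact im_g_eq c : exists b, g b == s0 *: c.
Proof. by have [b gb] := im_g c; exists b; apply/eqP. Qed.

Definition scaled_section_fun c := s0 *: e (xchoose (im_g_eq c)).

Lemma scaled_section_funE b c :
  g b = s0 *: c -> scaled_section_fun c = s0 *: e b.
Proof.
move=> gb; have gb' := eqP (xchooseP (im_g_eq c)).
apply/eqP; rewrite -subr_eq0 -scalerBr -linearB e_ker //.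
by rewrite linearB gb gb' subrr.
Qed.

Fact scaled_section_fun_is_linear : linear scaled_section_fun.
Proof.
move=> r c c'; have [b gb] := im_g c; have [b' gb'] := im_g c'.
rewrite (scaled_section_funE gb) (scaled_section_funE gb').
rewrite (scaled_section_funE (b := r *: b + b')).
  by rewrite (linearP e) scalerDr !scalerA mulrC.
by rewrite linearP gb gb' scalerDr !scalerA mulrC.
Qed.

Definition scaled_section : {linear C -> B} :=
  HB.pack scaled_section_fun
    (GRing.isLinear.Build R C B *:%R _ scaled_section_fun_is_linear).

Lemma scaled_splitting_scaled_section :
  scaled_splitting s1 (s0 * s0) f g t scaled_section.
Proof.
split=> [a | b | c | a] /=.
- exact: tf.
- by rewrite (scaled_section_funE (b := s0 *: b)) ?linearZ //= scalerA.
- have [b gb] := im_g c.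
  rewrite (scaled_section_funE gb) linearZ /= linearB /=.
  rewrite scalerBr -[s0 *: g (f _)]linearZ gf subr0 linearZ /= gb.
  by rewrite !scalerA mulrAC.
- by rewrite -scalerA -[s0 *: g _]linearZ gf scaler0.
Qed.

End ScaledSection.

Lemma scaled_splitting_of_exact_split (R : comNzRingType) (S : R -> Prop)
    (A B C : lmodType R) (f : {linear A -> B}) (g : {linear B -> C}) :
  Defs.multiplicative S -> u_S_exact S f g -> u_S_split S f ->
  exists r s (t : {linear B -> A}) (u : {linear C -> B}),
    S (s * r) /\ scaled_splitting r s f g t u.
Proof.
move=> [_ S_mul] [s0 Ss0 [_ ker_g gf im_g]] [s1 Ss1 [t tf]].
exists s1, (s0 * s0), t, (scaled_section tf ker_g im_g); split.
  exact: S_mul _ _ (S_mul _ _ Ss0 Ss0) Ss1.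
exact: scaled_splitting_scaled_section tf ker_g gf im_g.
Qed.

End ScaledSplittings.

Theorem proposition2p3 (R : comNzRingType) (S : R -> Prop)
    (A B C : lmodType R) (f : {linear A -> B}) (g : {linear B -> C}) :
  multiplicative S ->
  u_S_exact S f g ->
  u_S_split S f ->
  u_S_pure S f g.
Proof.
move=> S_mul fg_exact f_split M TA TB TC tA tB tC.
move=> tA_tensor tB_tensor tC_tensor F G Ff Gg.
have [r [s [t [u [Ssr fg_split]]]]] :=
  scaled_splitting_of_exact_split S_mul fg_exact f_split.
have [T Tt] := tensor_lift_exists tB_tensor tA_tensor.1 t.
have [U Uu] := tensor_lift_exists tC_tensor tB_tensor.1 u.
apply: u_S_exact_of_scaled_splitting Ssr _.
exact: scaled_splitting_tensor tA_tensor tB_tensor tC_tensor Ff Gg Tt Uu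
  fg_split.
Qed.
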